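(* Let $M$ be a matroid of rank $k$ on a set $E$ with $\#E=n$, let $\mathfrak{S}\subseteq\mathcal{P}(E)$, and let $\mathfrak{S}'=\{E-S:S\in\mathfrak{S}\}$. Then (1) $\mathrm{ec}_{\mathfrak{S}}(M)=\mathrm{ec}_{\mathfrak{S}'}(M^* )$; and (2) for every $S\in\mathfrak{S}$, $a_{\mathfrak{S}}(S)$ computed in $M$ equals $b_{\mathfrak{S}'}(E-S)$ computed in $M^*$.
   Context: $M^*$ is the dual matroid (bases are complements of bases of $M$; it has rank $n-k$). For a matroid $N$ of rank $d$ on $E$ and $\mathfrak{T}\subseteq\mathcal{P}(E)$, regarded as a poset under inclusion with Möbius function $\mu_{\mathfrak{T}}$: $c(T)=\#T-\mathrm{rk}_N T$; $a_{\mathfrak{T}}(T)=c(T)-\sum_{U\in\mathfrak{T},U\subsetneq T}a_{\mathfrak{T}}(U)$ recursively (equivalently $a_{\mathfrak{T}}(S)=\sum_{T\in\mathfrak{T}}c(T)\mu_{\mathfrak{T}}(T,S)$); $b_{\mathfrak{T}}(T)=\sum_{S\in\mathfrak{T}}(d-\mathrm{rk}_N S)\mu_{\mathfrak{T}}(T,S)$; and $\mathrm{ec}_{\mathfrak{T}}(N)=\sum_{S\in\mathfrak{T}}(d-\mathrm{rk}_N S)a_{\mathfrak{T}}(S)=\sum_{T\in\mathfrak{T}}c(T)b_{\mathfrak{T}}(T)$. *)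

From mathcomp Require Import all_boot all_order all_algebra.
Set Implicit Arguments. Unset Strict Implicit. Unset Printing Implicit Defensive.
Import GRing.Theory Num.Theory.
Local Open Scope ring_scope.

Definition is_matroid_bases (E : finType) (Bs : {set {set E}}) : Prop :=
  Bs != set0 /\
  forall B1 B2, B1 \in Bs -> B2 \in Bs -> forall x, x \in B1 :\: B2 ->
    exists2 y, y \in B2 :\: B1 & (y |: (B1 :\ x)) \in Bs.

Definition mrank (E : finType) (Bs : {set {set E}}) (X : {set E}) : nat :=
  (\max_(B in Bs) #|X :&: B|)%N.

Definition mrk (E : finType) (Bs : {set {set E}}) : nat := mrank Bs setT.

Definition dual_bases (E : finType) (Bs : {set {set E}}) : {set {set E}} :=
  [set ~: B | B in Bs].

(* Möbius function of the poset (T, ⊆), defined by the standard recursion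
   mu(T,T) = 1, mu(T,S) = - sum_{U in T, T ⊆ U ⊊ S} mu(T,U) for T ⊊ S,
   mu(T,S) = 0 otherwise; n is fuel (enough when n > #|S|). *)
Fixpoint mobius_fuel (E : finType) (P : {set {set E}}) (n : nat)
    (T S : {set E}) : int :=
  match n with
  | 0 => 0
  | n'.+1 =>
    if T == S then 1
    else if T \proper S then
      - \sum_(U in P | (T \subset U) && (U \proper S)) mobius_fuel P n' T U
    else 0
  end.

Definition mobius (E : finType) (P : {set {set E}}) (T S : {set E}) : int :=
  mobius_fuel P #|S|.+1 T S.

Definition cN (E : finType) (Bs : {set {set E}}) (T : {set E}) : int :=
  (#|T|%:Z - (mrank Bs T)%:Z).

Definition aT (E : finType) (P : {set {set E}}) (Bs : {set {set E}})
    (S : {set E}) : int :=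
  \sum_(T in P) cN Bs T * mobius P T S.

Definition bT (E : finType) (P : {set {set E}}) (Bs : {set {set E}})
    (T : {set E}) : int :=
  \sum_(S in P) ((mrk Bs)%:Z - (mrank Bs S)%:Z) * mobius P T S.

Definition ec (E : finType) (P : {set {set E}}) (Bs : {set {set E}}) : int :=
  \sum_(S in P) ((mrk Bs)%:Z - (mrank Bs S)%:Z) * aT P Bs S.

From mathcomp Require Import all_boot all_order all_algebra zify.
Set Implicit Arguments. Unset Strict Implicit. Unset Printing Implicit Defensive.
Import GRing.Theory Num.Theory.

(* Complementation reverses inclusion, so it maps the poset [P] anti-isomorphically
   onto [P'] and turns the left-sum identity of the Möbius function of [P'] into
   the right-sum identity for [P]; hence mu_P'(E-S, E-T) = mu_P(T, S).  By rank
   duality rk*(X) = #X - k + rk(E-X), the function d - rk of M is c of M* on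
   complements and vice versa, so a_P in M is b_P' in M*.  Part (1) follows from
   part (2) and the symmetric expression ec = sum_T c(T) b(T). *)

Section Mobius.
Variable E : finType.
Implicit Types (Q : {set {set E}}) (T S U V : {set E}).
Local Open Scope ring_scope.

Lemma mobius_fuel_enough Q T n m S : (#|S| < n)%N -> (#|S| < m)%N ->
  mobius_fuel Q n T S = mobius_fuel Q m T S.
Proof.
elim: n m S => [|n IHn] [|m] S //= ltSn ltSm.
case: (T == S) => //; case: (T \proper S) => //.
congr (- _); apply: eq_bigr => U /andP[_ /andP[_ /proper_card ltUS]].
by apply: IHn; apply: leq_trans ltUS _.
Qed.

Lemma mobius_rec Q T S : mobius Q T S =
  if T == S then 1 else if T \proper S then
  - \sum_(U in Q | (T \subset U) && (U \proper S)) mobius Q T U else 0.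
Proof.
rewrite {1}/mobius /=; case: (T == S) => //; case: (T \proper S) => //.
congr (- _); apply: eq_bigr => U /andP[_ /andP[_ /proper_card ltUS]].
by apply: mobius_fuel_enough => //; apply: leq_trans ltUS _.
Qed.

Lemma mobius_eq0 Q T S : ~~ (T \subset S) -> mobius Q T S = 0.
Proof.
move=> notTS; rewrite mobius_rec (negbTE (contra (@proper_sub _ _ _) notTS)).
by case: eqP notTS => // ->; rewrite subxx.
Qed.

Lemma sum_interval_delta Q (F : {set E} -> int) T S V :
  V \in Q -> T \subset V -> V \subset S ->
  \sum_(U in Q | (T \subset U) && (U \subset S)) F U * (U == V)%:R = F V.
Proof.
move=> VQ TV VS; rewrite (bigD1 V) /=; last by rewrite VQ TV VS.
by rewrite eqxx mulr1 big1 ?addr0 // => U /andP[_ /negbTE->]; rewrite mulr0.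
Qed.

Lemma mobius_sum_left Q T S : S \in Q ->
  \sum_(U in Q | (T \subset U) && (U \subset S)) mobius Q T U = (T == S)%:R.
Proof.
move=> SQ; have [TS|notTS] := boolP (T \subset S); last first.
  rewrite big1 => [|U /andP[_ /andP[TU US]]]; last by rewrite (subset_trans TU US) in notTS.
  by case: eqP notTS => // ->; rewrite subxx.
rewrite (bigD1 S) /=; last by rewrite SQ TS subxx.
rewrite (eq_bigl (fun U => (U \in Q) && ((T \subset U) && (U \proper S)))) => [|U];
  last by rewrite properEneq; case: (U \in Q) (T \subset U) (U \subset S) (U != S) => [] [] [] [].
rewrite mobius_rec; case: eqP => [<-|/eqP neTS].
  by rewrite big1 ?addr0 // => U /andP[_ /andP[TU /proper_sub_trans/(_ TU)]]; rewrite properxx.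
by rewrite properEneq neTS TS addNr.
Qed.

Lemma mobius_unique_right Q (nu : {set E} -> {set E} -> int) T S :
  T \in Q -> S \in Q -> T \subset S ->
  (forall V, V \in Q -> \sum_(U in Q | (V \subset U) && (U \subset S)) nu U S = (V == S)%:R) ->
  nu T S = mobius Q T S.
Proof.
move=> TQ SQ TS nu_right.
pose I V := (V \in Q) && ((T \subset V) && (V \subset S)).
pose D := \sum_(V | I V) \sum_(U in Q | (V \subset U) && (U \subset S))
            mobius Q T V * nu U S.
have -> : mobius Q T S = D.
  rewrite -(sum_interval_delta (mobius Q T) SQ TS (subxx S)).
  by apply: eq_bigr => V /andP[VQ _]; rewrite -mulr_sumr nu_right.
rewrite /D (exchange_big_dep I) => [|V U /andP[_ /andP[TV _]] /andP[UQ /andP[VU US]]];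
  last by rewrite /I UQ US (subset_trans TV VU).
rewrite -(sum_interval_delta (nu^~ S) TQ (subxx T) TS).
apply: eq_bigr => U /andP[UQ /andP[TU US]].
rewrite eq_sym -(mobius_sum_left T UQ) mulr_sumr.
apply: eq_big => [V|V _]; last exact: mulrC.
rewrite /I UQ US !andbT; case: (V \in Q) (T \subset V) => [] [] //=.
by case VU: (V \subset U); rewrite ?andbF // (subset_trans VU US).
Qed.

Lemma sum_setC (P : {set {set E}}) (F : {set E} -> int) :
  \sum_(X in [set ~: S | S in P]) F X = \sum_(S in P) F (~: S).
Proof. by rewrite big_imset // => X Y _ _; apply: setC_inj. Qed.

Lemma mobius_setC (P : {set {set E}}) T S : T \in P -> S \in P ->
  mobius [set ~: X | X in P] (~: S) (~: T) = mobius P T S.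
Proof.
move=> TP SP; have [TS|notTS] := boolP (T \subset S); last by rewrite !mobius_eq0 ?setCS.
apply: (mobius_unique_right (nu := fun U S => mobius _ (~: S) (~: U))) => // V VP.
rewrite -(inj_eq (@setC_inj _)) eq_sym -(mobius_sum_left _ (imset_f _ VP)).
rewrite [RHS]big_mkcondr sum_setC -big_mkcondr.
by apply: eq_bigl => U; rewrite !setCS (andbC (U \subset S)).
Qed.

End Mobius.

Lemma eq_bigmax_shift (I : finType) (A : {pred I}) (F G : I -> nat) k c :
  0 < #|A| -> (forall i, i \in A -> F i + k = G i + c) ->
  \max_(i in A) F i + k = \max_(i in A) G i + c.
Proof.
move=> A_gt0 FG; apply/eqP; rewrite eqn_leq; apply/andP; split.
  by have [i Ai ->] := eq_bigmax_cond F A_gt0; rewrite FG // leq_add2r leq_bigmax_cond.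
by have [j Aj ->] := eq_bigmax_cond G A_gt0; rewrite -FG // leq_add2r leq_bigmax_cond.
Qed.

Section Matroid.
Variables (E : finType) (Bs : {set {set E}}).
Hypothesis bases_Bs : is_matroid_bases Bs.

Lemma card_bases_le B1 B2 : B1 \in Bs -> B2 \in Bs -> #|B1| <= #|B2|.
Proof.
have [_ exchange] := bases_Bs.
move: {2}#|B1 :\: B2| (erefl #|B1 :\: B2|) => m.
elim: m B1 => [|m IHm] B1 cardD B1s B2s.
  by apply: subset_leq_card; rewrite -setD_eq0 -cards_eq0 cardD.
have [x xD] : exists x, x \in B1 :\: B2 by apply/set0Pn; rewrite -card_gt0 cardD.
have [y yD B1's] := exchange _ _ B1s B2s x xD.
move: xD yD; rewrite !inE => /andP[xB2 xB1] /andP[yB1 yB2].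
have card_B1' : #|y |: (B1 :\ x)| = #|B1|.
  by rewrite cardsU1 !inE (negbTE yB1) andbF (cardsD1 x B1) xB1.
rewrite -card_B1' IHm //.
have -> : (y |: (B1 :\ x)) :\: B2 = (B1 :\: B2) :\ x.
  apply/setP => z; rewrite !inE; case: (z =P y) => [->|_]; first by rewrite yB2 !andbF.
  by rewrite andbCA.
by apply/eqP; rewrite -eqSS -cardD (cardsD1 x (B1 :\: B2)) !inE xB1 xB2.
Qed.

Lemma card_bases B1 B2 : B1 \in Bs -> B2 \in Bs -> #|B1| = #|B2|.
Proof. by move=> B1s B2s; apply/eqP; rewrite eqn_leq !card_bases_le. Qed.

Lemma bases_gt0 : 0 < #|Bs|.
Proof. by rewrite card_gt0; case: bases_Bs. Qed.

Lemma mrk_basis B : B \in Bs -> mrk Bs = #|B|.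
Proof.
move=> Bs_B; have := @eq_bigmax_shift _ Bs (fun B' => #|setT :&: B'|) (fun=> 0) 0 #|B|.
rewrite /mrk /mrank big1_eq !addn0 add0n => -> //; first exact: bases_gt0.
by move=> B' Bs_B'; rewrite setTI (card_bases Bs_B' Bs_B) addn0.
Qed.

Lemma mrank_dual X : mrank (dual_bases Bs) X + mrk Bs = #|X| + mrank Bs (~: X).
Proof.
have [B0 Bs_B0] : exists B0, B0 \in Bs by apply/set0Pn; case: bases_Bs.
rewrite /mrank big_imset /= => [|B1 B2 _ _]; last exact: setC_inj.
rewrite [RHS]addnC (mrk_basis Bs_B0); apply: eq_bigmax_shift => [|B Bs_B]; first exact: bases_gt0.
rewrite (card_bases Bs_B0 Bs_B) -setDE setIC -setDE.
have := cardsID B X; have := cardsID X B; rewrite setIC; lia.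
Qed.

Lemma mrk_dual : mrk (dual_bases Bs) + mrk Bs = #|E|.
Proof.
rewrite /mrk mrank_dual setCT cardsT /mrank big1 ?addn0 // => B _.
by rewrite set0I cards0.
Qed.

Local Open Scope ring_scope.

Lemma cN_dual_setC S : cN (dual_bases Bs) (~: S) = (mrk Bs)%:Z - (mrank Bs S)%:Z.
Proof. by rewrite /cN; have := mrank_dual (~: S); have := cardsC S; rewrite setCK; lia. Qed.

Lemma mrk_dual_sub_mrank_setC S :
  (mrk (dual_bases Bs))%:Z - (mrank (dual_bases Bs) (~: S))%:Z = cN Bs S.
Proof.
rewrite /cN; have := mrank_dual (~: S); have := mrk_dual; have := cardsC S.
rewrite setCK; lia.
Qed.

Lemma aT_eq_bT_dual (P : {set {set E}}) S : S \in P ->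
  aT P Bs S = bT [set ~: X | X in P] (dual_bases Bs) (~: S).
Proof.
move=> SP; rewrite /bT sum_setC; apply: eq_bigr => T TP.
by rewrite mobius_setC // mrk_dual_sub_mrank_setC.
Qed.

End Matroid.

Local Open Scope ring_scope.

Lemma ec_sum_cN_bT (E : finType) (P Bs : {set {set E}}) :
  ec P Bs = \sum_(T in P) cN Bs T * bT P Bs T.
Proof.
rewrite /ec; under eq_bigr do rewrite /aT mulr_sumr; rewrite exchange_big /=.
by apply: eq_bigr => T _; rewrite /bT mulr_sumr; apply: eq_bigr => S _; rewrite mulrCA.
Qed.

Theorem proposition6p2 (E : finType) (Bs : {set {set E}}) (P : {set {set E}}) :
  is_matroid_bases Bs ->
  let P' := [set ~: S | S in P] in
  ec P Bs = ec P' (dual_bases Bs) /\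
  (forall S, S \in P -> aT P Bs S = bT P' (dual_bases Bs) (~: S)).
Proof.
move=> bases_Bs P'; split; last exact: aT_eq_bT_dual.
rewrite [RHS]ec_sum_cN_bT /P' sum_setC /ec; apply: eq_bigr => S SP.
by rewrite (aT_eq_bT_dual bases_Bs SP) cN_dual_setC.
Qed.
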